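(* Let $b>0$ and let $A_1,\dots,A_n$ and $L_1,\dots,L_n$ be finite linear orders, with $A_1,\dots,A_n$ non-empty. There is a finite linear order $I$ with the following property. Consider a coloring with $b$ colors of all $n$-tuples $(s_1,\dots,s_n)$ such that (i) $s_1\colon A_1\oplus (L_1\times I)^y\to A_1\oplus 1$, for some $y\in L_1\times I$, is a sealed $A_1$-rigid surjection, and (ii) for $2\leq i\leq n$, $s_i\colon A_i\oplus (L_i\times I)\to A_i$ is an $A_i$-rigid surjection. Then there exist functions $p_i\colon A_i\oplus (L_i\times I)\to A_i\oplus L_i$, $1\leq i\leq n$, each with property (P) (for $A=A_i$, $L=L_i$), such that for each $x\in L_1$, each sealed $A_1$-rigid surjection $r_1\colon A_1\oplus L_1^x\to A_1\oplus 1$ and all $A_i$-rigid surjections $r_i\colon A_i\oplus L_i\to A_i$, $2\leq i\leq n$, the color of \[ (r_1\circ p_1^x,\ r_2\circ p_2,\ \dots,\ r_n\circ p_n) \] depends only on $x$.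
   Context: For linear orders $A$ and $L$, $A\oplus L$ is the linear order on the disjoint union with $L$ placed on top of $A$; $A\oplus 1$ is $A$ with one new top element added. $L\times I$ carries the lexicographic order. For a linear order $J$ and $x\in J$, $J^x=\{y\in J\mid y\leq_J x\}$. A function $p\colon A\oplus(L\times I)\to A\oplus L$ has property (P) if $p\upharpoonright A={\rm id}_A$ and for every $x\in L$, $x\in p[\{x\}\times I]\subseteq A\cup\{x\}$. For such $p$ and $x\in L$, $p^x$ denotes the restriction of $p$ to $\{z\in A\oplus(L\times I)\mid z\leq \min p^{-1}(x)\}$. An $A$-rigid surjection from $A\oplus J$ to $A$ (with $J$ a linear order) is any function that is the identity on $A$. A sealed $A$-rigid surjection from $A\oplus J^x$ to $A\oplus 1$ is a function that is the identity on $A$, maps $x$ (the largest element) to the top element of $A\oplus 1$, and maps all other elements of $J^x$ into $A$. *)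

From mathcomp Require Import all_boot all_order.
Set Implicit Arguments. Unset Strict Implicit. Unset Printing Implicit Defensive.

(* Finite linear orders are represented by ordinals 'I_k with the usual order.
   A (+) J is the sum type A + J, with A placed below J. *)

Definition sum_le {A B : Type} (leA : rel A) (leB : rel B) (z w : A + B) : bool :=
  match z, w with
  | inl u, inl v => leA u v
  | inl _, inr _ => true
  | inr _, inl _ => false
  | inr u, inr v => leB u v
  end.

Definition ord_le {k : nat} (u v : 'I_k) : bool := (u <= v)%N.

Definition lex_le {l m : nat} (y y' : 'I_l * 'I_m) : bool :=
  (y.1 < y'.1)%N || ((y.1 == y'.1) && (y.2 <= y'.2)%N).

Definition leALI {a l m : nat} : rel ('I_a + ('I_l * 'I_m)) :=
  sum_le ord_le lex_le.

Definition leAL {a l : nat} : rel ('I_a + 'I_l) := sum_le ord_le ord_le.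

Definition propP {a l m : nat} (p : {ffun 'I_a + ('I_l * 'I_m) -> 'I_a + 'I_l}) : Prop :=
  (forall u : 'I_a, p (inl u) = inl u) /\
  (forall x : 'I_l,
     (exists i : 'I_m, p (inr (x, i)) = inr x) /\
     (forall i : 'I_m, match p (inr (x, i)) with
                       | inl _ => true
                       | inr x' => x' == x
                       end)).

Definition is_min_preimage {a l m : nat}
  (p : {ffun 'I_a + ('I_l * 'I_m) -> 'I_a + 'I_l}) (x : 'I_l) (y0 : 'I_l * 'I_m) : Prop :=
  p (inr y0) = inr x /\ (forall z, p z = inr x -> leALI (inr y0) z).

Definition rigid {a : nat} {J : finType} (s : {ffun 'I_a + J -> 'I_a}) : Prop :=
  forall u : 'I_a, s (inl u) = u.

(* A (+) 1 is represented by option 'I_a, with None the new top element.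
   Sealed A-rigid surjection A (+) L^x -> A (+) 1, represented by a total
   function on A (+) L of which only the values on A (+) L^x matter. *)
Definition sealed_L {a l : nat} (x : 'I_l) (r : {ffun 'I_a + 'I_l -> option 'I_a}) : Prop :=
  (forall u : 'I_a, r (inl u) = Some u) /\ r (inr x) = None /\
  (forall x' : 'I_l, (x' < x)%N -> r (inr x') <> None).

(* Canonical representation of a function with domain A (+) (L x I)^y :
   the pair (y, f) where f is the total function agreeing with the given one
   on A (+) (L x I)^y and equal to None elsewhere. *)
Definition trunc {a l m : nat} (y : 'I_l * 'I_m)
  (f : 'I_a + ('I_l * 'I_m) -> option 'I_a) : {ffun 'I_a + ('I_l * 'I_m) -> option 'I_a} :=
  [ffun z => if leALI z (inr y) then f z else None].

(* The maps p_i and the rows of p_1 are read off variable words over the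
   alphabet of pairs (u, rho), u in A_1 and rho a tuple of maps L_i -> A_i:
   position (y, j) of L x I is sent to y when j is a variable position, and
   into A according to the letter at j otherwise.  Composing with rigid
   surjections then amounts to substituting a letter for the variable, and
   the truncation at min p_1^-1(x) only depends on the word for row x and on
   the substituted words of the earlier rows.  An iterated Hales-Jewett
   theorem, which chooses the words from the last one down, makes all these
   colours independent of the substituted letters. *)

From mathcomp Require Import all_boot all_order.
From Stdlib Require Import FunctionalExtensionality.
Set Implicit Arguments. Unset Strict Implicit. Unset Printing Implicit Defensive.

Section Words.
Variable A : finType.

Definition word N := {ffun 'I_N -> A}.

(* [None] marks the positions of the variable. *)
Definition vword N := {ffun 'I_N -> option A}.

Definition is_variable N (w : vword N) := exists j, w j = None.

Definition subst N (w : vword N) (a : A) : word N := [ffun j => odflt a (w j)].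

Definition constw N (u : word N) : vword N := [ffun j => Some (u j)].

Lemma subst_const N (u : word N) a : subst (constw u) a = u.
Proof. by apply/ffunP => j; rewrite !ffunE. Qed.

Definition has_monochromatic_line (C : Type) N (chi : word N -> C) :=
  exists w : vword N, is_variable w /\ forall a a', chi (subst w a) = chi (subst w a').

End Words.

Definition hales_jewett (A C : finType) :=
  exists N, forall chi : word A N -> C, has_monochromatic_line chi.

Definition catw (B : Type) n1 n2 (f : {ffun 'I_n1 -> B}) (g : {ffun 'I_n2 -> B}) :
  {ffun 'I_(n1 + n2) -> B} :=
  [ffun j => match split j with inl j1 => f j1 | inr j2 => g j2 end].

Lemma subst_cat (A : finType) n1 n2 (w1 : vword A n1) (w2 : vword A n2) a :
  subst (catw w1 w2) a = catw (subst w1 a) (subst w2 a).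
Proof. by apply/ffunP => j; rewrite !ffunE; case: (split j) => j'; rewrite ffunE. Qed.

Lemma is_variable_catl (A : finType) n1 n2 (w1 : vword A n1) (w2 : vword A n2) :
  is_variable w1 -> is_variable (catw w1 w2).
Proof. by case=> j hj; exists (lshift n2 j); rewrite ffunE (unsplitK (inl j)). Qed.

Lemma is_variable_catr (A : finType) n1 n2 (w1 : vword A n1) (w2 : vword A n2) :
  is_variable w2 -> is_variable (catw w1 w2).
Proof. by case=> j hj; exists (rshift n1 j); rewrite ffunE (unsplitK (inr j)). Qed.

Lemma hales_jewett_param (A X C : finType) : hales_jewett A {ffun X -> C} ->
  exists N, forall chi : X -> word A N -> C, exists w : vword A N,
    is_variable w /\ forall x a a', chi x (subst w a) = chi x (subst w a').
Proof.
case=> N HN; exists N => chi; have [w [var_w Hw]] := HN (fun u => [ffun x => chi x u]).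
exists w; split=> // x a a'.
by have := congr1 (fun F : {ffun X -> C} => F x) (Hw a a'); rewrite !ffunE.
Qed.

Section ColorFocusing.
Variable k : nat.
Hypothesis hj_k : forall C : finType, hales_jewett 'I_k.+1 C.

Definition lift_word N (u : word 'I_k.+1 N) : word 'I_k.+2 N :=
  [ffun j => lift ord_max (u j)].

Definition lift_vword N (w : vword 'I_k.+1 N) : vword 'I_k.+2 N :=
  [ffun j => omap (lift ord_max) (w j)].

Lemma subst_lift_vword N (w : vword 'I_k.+1 N) a :
  subst (lift_vword w) (lift ord_max a) = lift_word (subst w a).
Proof. by apply/ffunP => j; rewrite !ffunE; case: (w j). Qed.

Definition focused (C : Type) N (chi : word 'I_k.+2 N -> C) (f : word 'I_k.+2 N) (c : C) :=
  exists w : vword 'I_k.+2 N, [/\ is_variable w, subst w ord_max = f &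
    forall a, chi (subst w (lift ord_max a)) = c].

Lemma color_focusing (C : finType) s : exists N, forall chi : word 'I_k.+2 N -> C,
  has_monochromatic_line chi \/
  exists f (D : {set C}), #|D| = s /\ {in D, forall c, focused chi f c}.
Proof.
elim: s => [|s [Ns HNs]].
  exists 0 => chi; right; exists [ffun _ => ord_max], set0.
  by split; [rewrite cards0 | move=> c; rewrite inE].
have [N' HN'] := hales_jewett_param (hj_k {ffun word 'I_k.+2 Ns -> C}).
exists (Ns + N') => chi.
have [L' [varL' HL']] := HN' (fun u v => chi (catw u (lift_word v))).
pose v0 := lift_word (subst L' ord0).
pose psi u := chi (catw u v0).
have chi_tail u a : chi (catw u (subst (lift_vword L') (lift ord_max a))) = psi u.
  by rewrite subst_lift_vword /psi /v0 (HL' u a ord0).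
have mono_line_of_psi (L : vword _ Ns) : is_variable L ->
    (forall a, chi (subst (catw L (constw v0)) a) = psi (subst L ord_max)) ->
    has_monochromatic_line chi.
  move=> varL HL; exists (catw L (constw v0)); split; first exact: is_variable_catl.
  by move=> a a'; rewrite !HL.
case: (HNs psi) => [[L [varL HL]] | [f [D [cardD focD]]]].
  left; apply: (mono_line_of_psi L varL) => a.
  by rewrite subst_cat subst_const; apply: HL.
case Df: (psi f \in D).
  have [L [varL Lf HL]] := focD _ Df.
  left; apply: (mono_line_of_psi L varL) => a; rewrite subst_cat subst_const -/(psi _).
  by case: (unliftP ord_max a) => [b ->|->]; rewrite ?HL ?Lf.
right; exists (catw f (subst (lift_vword L') ord_max)), (psi f |: D); split.
  by rewrite cardsU1 Df cardD.
move=> c; rewrite !inE => /orP [/eqP ->|cD].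
  exists (catw (constw f) (lift_vword L')); split.
  - by apply: is_variable_catr; case: varL' => j hj; exists j; rewrite ffunE hj.
  - by rewrite subst_cat subst_const.
  - by move=> a; rewrite subst_cat subst_const chi_tail.
have [L [varL Lf HL]] := focD _ cD.
exists (catw L (lift_vword L')); split; first exact: is_variable_catl.
- by rewrite subst_cat Lf.
- by move=> a; rewrite subst_cat chi_tail HL.
Qed.

(* Among #|C| lines focused at f with distinct colours, one has the colour of
   f itself, and that line is monochromatic. *)
Lemma hales_jewett_step (C : finType) : hales_jewett 'I_k.+2 C.
Proof.
have [N HN] := color_focusing C #|C|.
exists N => chi; case: (HN chi) => [//|[f [D [cardD focD]]]].
have D_full : D = setT by apply/eqP; rewrite eqEcard subsetT cardsT cardD leqnn.
have chifD : chi f \in D by rewrite D_full inE.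
have [L [varL Lf HL]] := focD _ chifD.
exists L; split=> // a a'.
suff chiL b : chi (subst L b) = chi f by rewrite !chiL.
by case: (unliftP ord_max b) => [b' ->|->]; rewrite ?Lf ?HL.
Qed.

End ColorFocusing.

Lemma hales_jewett_ord k (C : finType) : hales_jewett 'I_k C.
Proof.
have var_const_None (A : finType) : is_variable [ffun _ : 'I_1 => None : option A].
  by exists ord0; rewrite ffunE.
case: k => [|k]; first by exists 1 => chi; exists [ffun _ => None]; split=> // -[].
elim: k C => [|k IH] C; last exact: hales_jewett_step.
by exists 1 => chi; exists [ffun _ => None]; split=> // a a'; rewrite (ord1 a) (ord1 a').
Qed.

Lemma hales_jewett_fin (A C : finType) : hales_jewett A C.
Proof.
have [N HN] := hales_jewett_ord #|A| C.
exists N => chi.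
have [w [[j hj] Hw]] := HN (fun u => chi [ffun j => enum_val (u j)]).
exists [ffun j => omap enum_val (w j)]; split; first by exists j; rewrite ffunE hj.
have substE a : subst [ffun j => omap enum_val (w j)] a =
    [ffun j => enum_val (subst w (enum_rank a) j)].
  by apply/ffunP => i; rewrite !ffunE; case: (w i) => //=; rewrite enum_rankK.
by move=> a a'; rewrite !substE; apply: Hw.
Qed.

Definition snoc_fun (B : Type) T (f : 'I_T -> B) (b : B) (t : 'I_T.+1) : B :=
  if unlift ord_max t is Some s then f s else b.

Lemma snoc_fun_lift (B : Type) T (f : 'I_T -> B) b s : snoc_fun f b (lift ord_max s) = f s.
Proof. by rewrite /snoc_fun liftK. Qed.

Lemma snoc_fun_max (B : Type) T (f : 'I_T -> B) b : snoc_fun f b ord_max = b.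
Proof. by rewrite /snoc_fun unlift_none. Qed.

Lemma snoc_fun_prefix (B : Type) T (f g : 'I_T -> B) b b' (t : 'I_T.+1) :
  (forall s : 'I_T, s < t -> f s = g s) ->
  forall r : 'I_T.+1, r < t -> snoc_fun f b r = snoc_fun g b' r.
Proof.
move=> eq_fg r lt_rt; case: (unliftP ord_max r) lt_rt => [s ->|->] lt_st.
  by rewrite !snoc_fun_lift eq_fg // -(lift_max s).
by have := leq_trans lt_st (leq_ord t); rewrite ltnn.
Qed.

Section IteratedHalesJewett.
Variables (L : finType) (l0 : L).

Definition substs N T (v : 'I_T -> vword L N) (a : 'I_T -> L) : 'I_T -> word L N :=
  fun s => subst (v s) (a s).

Lemma substs_snoc N T (v : 'I_T -> vword L N) w a :
  substs (snoc_fun v w) a =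
  snoc_fun (substs v (fun s => a (lift ord_max s))) (subst w (a ord_max)).
Proof.
apply: functional_extensionality => t; rewrite /substs.
case: (unliftP ord_max t) => [s ->|->]; first by rewrite !snoc_fun_lift.
by rewrite [in LHS]snoc_fun_max snoc_fun_max.
Qed.

Definition prefix_local N T (C : Type) (K : 'I_T -> vword L N -> ('I_T -> word L N) -> C) :=
  forall (t : 'I_T) v U U', (forall s : 'I_T, s < t -> U s = U' s) -> K t v U = K t v U'.

Lemma iterated_hales_jewett T (CK CQ : finType) : exists N,
  forall (K : 'I_T -> vword L N -> ('I_T -> word L N) -> CK) (Q : ('I_T -> word L N) -> CQ),
  prefix_local K ->
  exists v : 'I_T -> vword L N, (forall t, is_variable (v t)) /\
    forall a a', Q (substs v a) = Q (substs v a') /\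
                 forall t, K t (v t) (substs v a) = K t (v t) (substs v a').
Proof.
elim: T CK CQ => [|T IH] CK CQ.
  exists 0 => K Q _; exists (fun _ => [ffun _ => None]); split=> [[]//|a a'].
  by split=> [|[]//]; congr Q; apply: functional_extensionality => -[].
have [N1 HN1] := IH CK (CQ * CK)%type.
have [N2 HN2] := hales_jewett_param (hales_jewett_fin L {ffun {ffun 'I_T -> word L N1} -> CQ}).
(* The last word varies on the last N2 positions and the earlier ones on the
   first N1, so that Hales-Jewett for the last word can colour by all the
   earlier data at once. *)
exists (N1 + N2) => K Q K_local.
pose c1 : word L N1 := [ffun _ => l0].
pose c2 : word L N2 := [ffun _ => l0].
pose pad (U : 'I_T -> word L N1) (u : word L N2) :=
  snoc_fun (fun s => catw (U s) c2) (catw c1 u).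
have [w2 [var_w2 Hw2]] := HN2 (fun x u => Q (pad x u)).
have Q_last U e : Q (pad U (subst w2 e)) = Q (pad U (subst w2 l0)).
  have -> : U = [ffun s => U s] by apply: functional_extensionality => s; rewrite ffunE.
  exact: Hw2.
have K_pad t v U u : K t v (pad U u) = K t v (pad U (subst w2 l0)).
  by apply/K_local/snoc_fun_prefix.
pose w := catw (constw c1) w2.
pose K' s v' U' := K (lift ord_max s) (catw v' (constw c2)) (pad U' (subst w2 l0)).
pose Q' U' := (Q (pad U' (subst w2 l0)), K ord_max w (pad U' (subst w2 l0))).
have K'_local : prefix_local K'.
  by move=> s v' U U' eqU; apply/K_local/snoc_fun_prefix => r; rewrite lift_max => /eqU ->.
have [v' [var_v' Hv']] := HN1 K' Q' K'_local.
exists (snoc_fun (fun s => catw (v' s) (constw c2)) w); split.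
  move=> t; case: (unliftP ord_max t) => [s ->|->].
    by rewrite snoc_fun_lift; apply: is_variable_catl.
  by rewrite snoc_fun_max; apply: is_variable_catr.
have substsE a : substs (snoc_fun (fun s => catw (v' s) (constw c2)) w) a =
    pad (substs v' (fun s => a (lift ord_max s))) (subst w2 (a ord_max)).
  rewrite substs_snoc /pad subst_cat subst_const; congr snoc_fun.
  by apply: functional_extensionality => s; rewrite /substs subst_cat subst_const.
move=> a a'; rewrite !substsE.
have [Q'_eq K'_eq] := Hv' (fun s => a (lift ord_max s)) (fun s => a' (lift ord_max s)).
split; first by rewrite !Q_last; case: Q'_eq.
move=> t; rewrite !K_pad; case: (unliftP ord_max t) => [s ->|->].
  by rewrite snoc_fun_lift; apply: K'_eq.
by rewrite snoc_fun_max; case: Q'_eq.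
Qed.

End IteratedHalesJewett.

Definition first_var (B : finType) N (w : vword B N) (j : 'I_N) :=
  (w j == None) && [forall i : 'I_N, (i < j) ==> (w i != None)].

Lemma first_var_uniq (B : finType) N (w : vword B N) j j' :
  first_var w j -> first_var w j' -> j = j'.
Proof.
move=> /andP[/eqP wj /forallP minj] /andP[/eqP wj' /forallP minj'].
apply: val_inj; case: (ltngtP j j') => // lt.
  by have := implyP (minj' j) lt; rewrite wj.
by have := implyP (minj j') lt; rewrite wj'.
Qed.

Section VwordProjection.
Variables (B : finType) (a l N : nat) (ws : 'I_l -> vword B N) (f : 'I_l -> B -> 'I_a).

Definition vword_proj : {ffun 'I_a + ('I_l * 'I_N) -> 'I_a + 'I_l} :=
  [ffun z => match z with
             | inl u => inl u
             | inr (y, j) => if ws y j is Some q then inl (f y q) else inr y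
             end].

Lemma vword_proj_propP : (forall y, is_variable (ws y)) -> propP vword_proj.
Proof.
move=> var_ws; split=> [u|y]; first by rewrite ffunE.
split=> [|j]; last by rewrite ffunE; case: (ws y j).
by have [j wj] := var_ws y; exists j; rewrite ffunE wj.
Qed.

Lemma vword_proj_min_preimage x y j :
  is_min_preimage vword_proj x (y, j) -> y = x /\ first_var (ws x) j.
Proof.
rewrite /is_min_preimage ffunE; case wj: (ws y j) => [q|]; first by case.
case=> -[<-] minj.
split=> //; rewrite /first_var wj eqxx; apply/forallP => i; apply/implyP => lt_ij.
apply/eqP => wi; have := minj (inr (y, i)); rewrite ffunE wi => /(_ erefl).
by rewrite /leALI /= /lex_le /= ltnn eqxx /= leqNgt lt_ij.
Qed.

End VwordProjection.

Section Application.
Variables (b a1 l1 n : nat) (a l : 'I_n -> nat) (N : nat).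

Definition letter := ('I_a1 * {dffun forall i : 'I_n, {ffun 'I_(l i) -> 'I_(a i)}})%type.

Definition rigid_row (W : word letter N) (i : 'I_n) :
    {ffun 'I_(a i) + ('I_(l i) * 'I_N) -> 'I_(a i)} :=
  [ffun z => match z with inl u => u | inr (y, j) => (W j).2 i y end].

Definition sealed_row (x : 'I_l1) (j0 : 'I_N) (w : vword letter N)
    (U : 'I_l1 -> word letter N) : {ffun 'I_a1 + ('I_l1 * 'I_N) -> option 'I_a1} :=
  trunc (x, j0) (fun z => match z with
                          | inl u => Some u
                          | inr (y, j) => if y < x then Some (U y j).1 else omap fst (w j)
                          end).

Lemma rigid_row_subst (w : vword letter N) u0
    (r : forall i : 'I_n, {ffun 'I_(a i) + 'I_(l i) -> 'I_(a i)}) :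
  (forall i, rigid (r i)) ->
  rigid_row (subst w (u0, [ffun i => [ffun y => r i (inr y)]])) =
  (fun i => [ffun z => r i (vword_proj (fun _ => w) (fun y q => q.2 i y) z)]).
Proof.
move=> r_rigid; apply: functional_extensionality_dep => i.
apply/ffunP => -[u|[y j]]; rewrite !ffunE /= ?r_rigid //.
by case: (w j) => [q|] /=; rewrite ?r_rigid // !ffunE.
Qed.

Lemma sealed_row_subst (x : 'I_l1) (j0 : 'I_N) (ws : 'I_l1 -> vword letter N)
    (sigma : 'I_l1 -> letter) (r1 : {ffun 'I_a1 + 'I_l1 -> option 'I_a1}) :
  sealed_L x r1 -> (forall y : 'I_l1, y < x -> r1 (inr y) = Some (sigma y).1) ->
  trunc (x, j0) (fun z => r1 (vword_proj ws (fun _ q => q.1) z)) =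
  sealed_row x j0 (ws x) (fun y => subst (ws y) (sigma y)).
Proof.
move=> [r1A [r1x _]] r1lt; apply/ffunP => -[u|[y j]]; rewrite !ffunE //=.
case: ifP => // le_yx.
case: ltnP => [lt_yx|ge_yx].
  by case: (ws y j) => [q|] /=; rewrite ?r1A ?r1lt.
have -> : y = x.
  by apply/val_inj/eqP; move: le_yx; rewrite /leALI /= /lex_le /= ltnNge ge_yx => /andP[].
by case: (ws x j) => [q|] /=; rewrite ?r1A ?r1x.
Qed.

Variables (c : ('I_l1 * 'I_N) * {ffun 'I_a1 + ('I_l1 * 'I_N) -> option 'I_a1} ->
               (forall i : 'I_n, {ffun 'I_(a i) + ('I_(l i) * 'I_N) -> 'I_(a i)}) -> 'I_b)
          (k0 : 'I_b).

(* Word [0] carries the maps [s_i]; word [x + 1] carries row [x] of [s_1]. *)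
Definition row_color (t : 'I_l1.+1) (w : vword letter N) (U : 'I_l1.+1 -> word letter N) :
    'I_b :=
  if unlift ord0 t is Some x then
    if [pick j | first_var w j] is Some j0 then
      c ((x, j0), sealed_row x j0 w (fun y => U (lift ord0 y))) (rigid_row (U ord0))
    else k0
  else k0.

Lemma row_color_local : prefix_local row_color.
Proof.
move=> t w U U' eqU; rewrite /row_color; case: unliftP => [x ht|//].
case: pickP => // j0 _; rewrite eqU ?ht //; congr c; congr (_, _).
apply/ffunP => -[u|[y j]]; rewrite !ffunE //; case: ifP => // _.
by case: ifP => // lt_yx; rewrite eqU // ht.
Qed.

End Application.

Unset Implicit Arguments.

Theorem lemma4p9 (b : nat) (hb : (0 < b)%N)
  (a1 l1 : nat) (ha1 : (0 < a1)%N)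
  (n : nat) (a l : 'I_n -> nat) (ha : forall i, (0 < a i)%N) :
  exists m : nat,
  forall c : ('I_l1 * 'I_m) * {ffun 'I_a1 + ('I_l1 * 'I_m) -> option 'I_a1} ->
             (forall i : 'I_n, {ffun 'I_(a i) + ('I_(l i) * 'I_m) -> 'I_(a i)}) -> 'I_b,
  exists (p1 : {ffun 'I_a1 + ('I_l1 * 'I_m) -> 'I_a1 + 'I_l1})
         (p : forall i : 'I_n, {ffun 'I_(a i) + ('I_(l i) * 'I_m) -> 'I_(a i) + 'I_(l i)}),
    propP p1 /\ (forall i, propP (p i)) /\
    forall x : 'I_l1, exists k : 'I_b,
    forall y0 : 'I_l1 * 'I_m, is_min_preimage p1 x y0 ->
    forall r1 : {ffun 'I_a1 + 'I_l1 -> option 'I_a1}, sealed_L x r1 ->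
    forall r : (forall i : 'I_n, {ffun 'I_(a i) + 'I_(l i) -> 'I_(a i)}),
      (forall i, rigid (r i)) ->
      c (y0, trunc y0 (fun z => r1 (p1 z))) (fun i => [ffun z => r i (p i z)]) = k.
Proof.
pose u0 : 'I_a1 := Ordinal ha1.
pose rho0 : {dffun forall i, {ffun 'I_(l i) -> 'I_(a i)}} :=
  [ffun i => [ffun _ => Ordinal (ha i)]].
have [m Hm] := iterated_hales_jewett (u0, rho0) l1.+1 'I_b unit.
exists m => c; pose k0 : 'I_b := Ordinal hb.
have [v [var_v Hv]] := Hm _ (fun _ => tt) (row_color_local c k0).
pose p1 := vword_proj (fun y => v (lift ord0 y)) (fun _ q => q.1).
pose p i := vword_proj (fun _ => v ord0) (fun y q => q.2 i y).
exists p1, p; split; first exact: vword_proj_propP.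
split; first by move=> i; apply: vword_proj_propP.
move=> x; exists (row_color c k0 (lift ord0 x) (v (lift ord0 x))
                               (substs v (fun _ => (u0, rho0)))).
move=> [y j] /vword_proj_min_preimage [{y}-> j_first] r1 r1_sealed r r_rigid.
pose alpha t := if unlift ord0 t is Some y then (odflt u0 (r1 (inr y)), rho0)
                else (u0, [ffun i => [ffun y => r i (inr y)]]).
have [_ <-] := Hv alpha (fun _ => (u0, rho0)).
rewrite /row_color liftK; case: pickP => [j' /first_var_uniq /(_ j_first) ->|]; last first.
  by move=> /(_ j); rewrite j_first.
have r1_alpha (z : 'I_l1) : z < x -> r1 (inr z) = Some (alpha (lift ord0 z)).1.
  case: r1_sealed => _ [_ r1lt] lt_zx; rewrite /alpha liftK /=.
  by case E: (r1 (inr z)) => //; have := r1lt z lt_zx E.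
rewrite (sealed_row_subst j (fun y => v (lift ord0 y)) r1_sealed r1_alpha).
by rewrite /substs /alpha unlift_none rigid_row_subst.
Qed.
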